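(* Let $R$ be a t-unital ring and $Q$ a left $R$-module. Then the following are equivalent: (1) $Q$ is c-projective; (2) the c-unital left $R$-module $\mathrm{Hom}_R(R,Q)$ is c-projective; (3) the t-unital left $R$-module $R\otimes_R Q$ is c-projective.
   Context: Rings are associative, not necessarily unital; modules are not assumed unital. $R$ is t-unital if $R\otimes_R R\to R$ is an isomorphism. A left $R$-module $M$ is t-unital if $R\otimes_R M\to M$, $r\otimes m\mapsto rm$, is an isomorphism; a left module $P$ is c-unital if $P\to\mathrm{Hom}_R(R,P)$, $p\mapsto(r\mapsto rp)$, is an isomorphism. For t-unital $R$ the category $R\text{-}{}^{c}\mathsf{Mod}$ of c-unital left $R$-modules is abelian. A left $R$-module $Q$ (not necessarily c-unital) is c-projective if $\mathrm{Hom}_R(Q,{-})\colon R\text{-}{}^{c}\mathsf{Mod}\to\mathsf{Ab}$ takes cokernels in $R\text{-}{}^{c}\mathsf{Mod}$ to cokernels of abelian groups. *)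

From HB Require Import structures.
From mathcomp Require Import all_boot all_algebra.
From mathcomp Require Import boolp.

Set Implicit Arguments.
Unset Strict Implicit.
Unset Printing Implicit Defensive.
Import GRing.Theory.
Local Open Scope ring_scope.

Record nuRing := NuRing {
  nu_car :> zmodType;
  nu_mul : nu_car -> nu_car -> nu_car;
  nu_mulA : forall x y z, nu_mul x (nu_mul y z) = nu_mul (nu_mul x y) z;
  nu_mulDl : forall x y z, nu_mul (x + y) z = nu_mul x z + nu_mul y z;
  nu_mulDr : forall x y z, nu_mul x (y + z) = nu_mul x y + nu_mul x z }.

Record lmod (R : nuRing) := LMod {
  lm_car :> zmodType;
  lm_act : R -> lm_car -> lm_car;
  lm_actA : forall r s m, lm_act (nu_mul r s) m = lm_act r (lm_act s m);
  lm_actDl : forall r s m, lm_act (r + s) m = lm_act r m + lm_act s m;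
  lm_actDr : forall r m n, lm_act r (m + n) = lm_act r m + lm_act r n }.

Arguments lm_act {R} _ _ _.

Section Basics.
Variable R : nuRing.

Definition is_hom (M N : lmod R) (f : M -> N) : Prop :=
  (forall x y, f (x + y) = f x + f y) /\
  (forall r x, f (lm_act M r x) = lm_act N r (f x)).

Lemma reg_actA (r s m : R) : nu_mul (nu_mul r s) m = nu_mul r (nu_mul s m).
Proof. by rewrite nu_mulA. Qed.

Definition regmod : lmod R :=
  @LMod R R (@nu_mul R) reg_actA (@nu_mulDl R) (@nu_mulDr R).

Lemma nu_mul0r (x : R) : nu_mul 0 x = 0.
Proof.
by apply: (addrI (nu_mul 0 x)); rewrite addr0 -nu_mulDl addr0.
Qed.

Lemma nu_mulr0 (x : R) : nu_mul x 0 = 0.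
Proof.
by apply: (addrI (nu_mul x 0)); rewrite addr0 -nu_mulDr addr0.
Qed.

Lemma nu_mulNr (x y : R) : nu_mul (- x) y = - nu_mul x y.
Proof. by apply/eqP; rewrite -subr_eq0 opprK -nu_mulDl addNr nu_mul0r. Qed.

Lemma lm_act0 (M : lmod R) (r : R) : lm_act M r 0 = 0.
Proof.
by apply: (addrI (lm_act M r 0)); rewrite addr0 -lm_actDr addr0.
Qed.

Lemma lm_actN (M : lmod R) (r : R) (m : M) : lm_act M r (- m) = - lm_act M r m.
Proof. by apply/eqP; rewrite -subr_eq0 opprK -lm_actDr addNr lm_act0. Qed.

End Basics.
Arguments is_hom {R} M N f.
Arguments regmod : clear implicits.

Section HomR.
Variables (R : nuRing) (Q : lmod R).

Definition homR_type := {f : R -> Q | is_hom (regmod R) Q f}.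
HB.instance Definition _ := gen_eqMixin homR_type.
HB.instance Definition _ := gen_choiceMixin homR_type.

Lemma homR_ext (f g : homR_type) : (forall r, sval f r = sval g r) -> f = g.
Proof.
case: f g => [f pf] [g pg] /= fg; have efg : f = g by apply: funext.
by case: _ / efg in pg *; congr exist; apply: Prop_irrelevance.
Qed.

Lemma homR0_prop : is_hom (regmod R) Q (fun _ => 0).
Proof. by split=> *; rewrite ?addr0 ?lm_act0. Qed.

Lemma homRadd_prop (f g : homR_type) :
  is_hom (regmod R) Q (fun r => sval f r + sval g r).
Proof.
case: f g => [f [fD fL]] [g [gD gL]] /=; split=> *.
  by rewrite fD gD addrACA.
by rewrite fL gL lm_actDr.
Qed.

Lemma homRopp_prop (f : homR_type) : is_hom (regmod R) Q (fun r => - sval f r).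
Proof.
case: f => [f [fD fL]] /=; split=> *; first by rewrite fD opprD.
by rewrite fL lm_actN.
Qed.

Definition homR0 : homR_type := exist _ _ homR0_prop.
Definition homRadd (f g : homR_type) : homR_type := exist _ _ (homRadd_prop f g).
Definition homRopp (f : homR_type) : homR_type := exist _ _ (homRopp_prop f).

Lemma homR_addA : associative homRadd.
Proof. by move=> f g h; apply: homR_ext => r /=; rewrite addrA. Qed.
Lemma homR_addC : commutative homRadd.
Proof. by move=> f g; apply: homR_ext => r /=; rewrite addrC. Qed.
Lemma homR_add0 : left_id homR0 homRadd.
Proof. by move=> f; apply: homR_ext => r /=; rewrite add0r. Qed.
Lemma homR_addN : left_inverse homR0 homRopp homRadd.
Proof. by move=> f; apply: homR_ext => r /=; rewrite addNr. Qed.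

HB.instance Definition _ := GRing.isZmodule.Build homR_type
  homR_addA homR_addC homR_add0 homR_addN.

Lemma homRact_prop (s : R) (f : homR_type) :
  is_hom (regmod R) Q (fun r => sval f (nu_mul r s)).
Proof.
case: f => [f [fD fL]] /=; split=> *; first by rewrite nu_mulDl fD.
by rewrite -fL /= nu_mulA.
Qed.

Definition homRact (s : R) (f : homR_type) : homR_type :=
  exist _ _ (homRact_prop s f).

Lemma homR_actA r s (f : homR_type) :
  homRact (nu_mul r s) f = homRact r (homRact s f).
Proof. by apply: homR_ext => t /=; rewrite nu_mulA. Qed.
Lemma homR_actDl r s (f : homR_type) :
  homRact (r + s) f = homRact r f + homRact s f.
Proof.
apply: homR_ext => t /=; case: f => [f [fD fL]] /=; by rewrite nu_mulDr fD.
Qed.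
Lemma homR_actDr r (f g : homR_type) :
  homRact r (f + g) = homRact r f + homRact r g.
Proof. by apply: homR_ext. Qed.

Definition HomR : lmod R :=
  @LMod R homR_type homRact homR_actA homR_actDl homR_actDr.

End HomR.

(* The tensor product R (x)_R M of the right R-module R with a left module  *)
(* M, as the free commutative monoid on R * M (finite formal sums of        *)
(* r (x) m, represented by lists) modulo the congruence generated by        *)
(*   0 (x) m = 0,  (r + s) (x) m = r (x) m + s (x) m,                        *)
(*   r (x) (m + n) = r (x) m + r (x) n,  (r s) (x) m = r (x) (s m).          *)
(* (The quotient monoid is a group, -(r (x) m) = (-r) (x) m, hence it is the *)
(* usual tensor product of abelian groups.)  It is a left R-module via      *)
(* s (r (x) m) = (s r) (x) m.                                                *)
Section Tensor.
Variables (R : nuRing) (M : lmod R).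

Definition tgen := seq (R * M).

Inductive trel : tgen -> tgen -> Prop :=
| trel_refl l : trel l l
| trel_sym l1 l2 : trel l1 l2 -> trel l2 l1
| trel_trans l1 l2 l3 : trel l1 l2 -> trel l2 l3 -> trel l1 l3
| trel_cat l1 l2 l1' l2' : trel l1 l2 -> trel l1' l2' -> trel (l1 ++ l1') (l2 ++ l2')
| trel_comm l1 l2 : trel (l1 ++ l2) (l2 ++ l1)
| trel_zero m : trel [:: (0, m)] [::]
| trel_addl r s m : trel [:: (r + s, m)] [:: (r, m); (s, m)]
| trel_addr r m n : trel [:: (r, m + n)] [:: (r, m); (r, n)]
| trel_bal r s m : trel [:: (nu_mul r s, m)] [:: (r, lm_act M s m)].

Definition tens_type := {C : tgen -> Prop | exists l, C = trel l}.
HB.instance Definition _ := gen_eqMixin tens_type.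
HB.instance Definition _ := gen_choiceMixin tens_type.

Definition tclass (l : tgen) : tens_type := exist _ (trel l) (ex_intro _ l erefl).
Definition trepr (x : tens_type) : tgen := projT1 (cid (svalP x)).

Lemma treprK x : tclass (trepr x) = x.
Proof.
rewrite /trepr; case: (cid _) => l /= el; case: x el => C pC /= el.
by subst C; congr exist; apply: Prop_irrelevance.
Qed.

Lemma tclass_eq l1 l2 : trel l1 l2 -> tclass l1 = tclass l2.
Proof.
move=> h; have e : trel l1 = trel l2.
  apply: funext => l; apply: propext; split=> h'.
    exact: trel_trans (trel_sym h) h'.
  exact: trel_trans h h'.
exact: eq_exist.
Qed.

Lemma trel_repr l : trel (trepr (tclass l)) l.
Proof.
rewrite /trepr; case: (cid _) => l' /= el.
by have := trel_refl l; rewrite {1}el.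
Qed.

Lemma trel_catl l l1 l2 : trel l1 l2 -> trel (l ++ l1) (l ++ l2).
Proof. by move=> h; apply: trel_cat (trel_refl _) h. Qed.
Lemma trel_catr l l1 l2 : trel l1 l2 -> trel (l1 ++ l) (l2 ++ l).
Proof. by move=> h; apply: trel_cat h (trel_refl _). Qed.

Lemma trel_swap_mid a b c d : trel (a ++ b ++ c ++ d) (a ++ c ++ b ++ d).
Proof. by apply: trel_catl; rewrite !catA; apply: trel_catr; apply: trel_comm. Qed.

Lemma trel_map3 (f g h : R * M -> R * M) :
  (forall x, trel [:: f x] [:: g x; h x]) ->
  forall l, trel (map f l) (map g l ++ map h l).
Proof.
move=> fgh; elim=> [|x l IH] /=; first exact: trel_refl.
apply: (@trel_trans _ ([:: g x; h x] ++ (map g l ++ map h l))).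
  exact: trel_cat (fgh x) IH.
by have := trel_swap_mid [:: g x] [:: h x] (map g l) (map h l).
Qed.

Lemma trel_map0 (f : R * M -> R * M) :
  (forall x, trel [:: f x] [::]) -> forall l, trel (map f l) [::].
Proof.
move=> f0; elim=> [|x l IH] /=; first exact: trel_refl.
by have := trel_cat (f0 x) IH.
Qed.

Definition tneg (x : R * M) : R * M := (- x.1, x.2).
Definition tscal (s : R) (x : R * M) : R * M := (nu_mul s x.1, x.2).

Lemma trel_map (f : R * M -> R * M) :
  (forall m, trel [:: f (0, m)] [::]) ->
  (forall r s m, trel [:: f (r + s, m)] [:: f (r, m); f (s, m)]) ->
  (forall r m n, trel [:: f (r, m + n)] [:: f (r, m); f (r, n)]) ->
  (forall r s m, trel [:: f (nu_mul r s, m)] [:: f (r, lm_act M s m)]) ->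
  forall l1 l2, trel l1 l2 -> trel (map f l1) (map f l2).
Proof.
move=> h0 hl hr hb l1 l2; elim=> /=.
- by move=> l; apply: trel_refl.
- by move=> ? ? _ h; apply: trel_sym.
- by move=> ? ? ? _ h1 _ h2; apply: trel_trans h1 h2.
- by move=> ? ? ? ? _ h1 _ h2; rewrite !map_cat; apply: trel_cat.
- by move=> ? ?; rewrite !map_cat; apply: trel_comm.
- exact: h0.
- exact: hl.
- exact: hr.
- exact: hb.
Qed.

Lemma trel_neg l1 l2 : trel l1 l2 -> trel (map tneg l1) (map tneg l2).
Proof.
apply: trel_map => [m|r s m|r m n|r s m]; rewrite /tneg /= ?oppr0.
- exact: trel_zero.
- by rewrite opprD; apply: trel_addl.
- exact: trel_addr.
- by rewrite -nu_mulNr; apply: trel_bal.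
Qed.

Lemma trel_scal s l1 l2 : trel l1 l2 -> trel (map (tscal s) l1) (map (tscal s) l2).
Proof.
apply: trel_map => [m|r t m|r m n|r t m]; rewrite /tscal /= ?nu_mulr0.
- exact: trel_zero.
- by rewrite nu_mulDr; apply: trel_addl.
- exact: trel_addr.
- by rewrite nu_mulA; apply: trel_bal.
Qed.

Definition tens0 : tens_type := tclass [::].
Definition tensadd (x y : tens_type) : tens_type := tclass (trepr x ++ trepr y).
Definition tensopp (x : tens_type) : tens_type := tclass (map tneg (trepr x)).

Lemma tens_addA : associative tensadd.
Proof.
move=> x y z; apply: tclass_eq.
apply: trel_trans (trel_catl _ (trel_repr _)) _; rewrite catA.
by apply: trel_catr; apply: trel_sym; apply: trel_repr.
Qed.

Lemma tens_addC : commutative tensadd.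
Proof. by move=> x y; apply: tclass_eq; apply: trel_comm. Qed.

Lemma tens_add0 : left_id tens0 tensadd.
Proof.
move=> x; rewrite -[RHS]treprK; apply: tclass_eq.
by have := trel_catr (trepr x) (trel_repr [::]).
Qed.

Lemma tens_addN : left_inverse tens0 tensopp tensadd.
Proof.
move=> x; apply: tclass_eq; apply: trel_trans (trel_catr _ (trel_repr _)) _.
apply: (@trel_trans _ (map (fun p => (0, p.2)) (trepr x))).
  apply: trel_sym; rewrite -[X in _ ++ X]map_id.
  by apply: trel_map3 => -[r m] /=; rewrite -(addNr r); apply: trel_addl.
by apply: trel_map0 => -[r m]; apply: trel_zero.
Qed.

HB.instance Definition _ := GRing.isZmodule.Build tens_type
  tens_addA tens_addC tens_add0 tens_addN.

Definition tensact (s : R) (x : tens_type) : tens_type :=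
  tclass (map (tscal s) (trepr x)).

Lemma tens_actA r s x : tensact (nu_mul r s) x = tensact r (tensact s x).
Proof.
apply: tclass_eq; apply: trel_trans (trel_scal r (trel_sym (trel_repr _))).
by rewrite -map_comp; apply: eq_ind (trel_refl _) _ _;
  apply: eq_map => -[t m]; rewrite /tscal /= nu_mulA.
Qed.

Lemma tens_actDl r s x : tensact (r + s) x = tensact r x + tensact s x.
Proof.
apply: tclass_eq; apply: trel_sym.
apply: trel_trans (trel_cat (trel_repr _) (trel_repr _)) _.
apply: trel_sym; apply: trel_map3 => -[t m]; rewrite /tscal /= nu_mulDl.
exact: trel_addl.
Qed.

Lemma tens_actDr r x y : tensact r (x + y) = tensact r x + tensact r y.
Proof.
apply: tclass_eq; apply: trel_trans (trel_scal r (trel_repr _)) _.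
rewrite map_cat; apply: trel_sym.
exact: trel_cat (trel_repr _) (trel_repr _).
Qed.

Definition Tens : lmod R :=
  @LMod R tens_type tensact tens_actA tens_actDl tens_actDr.

(* The map R (x)_R M -> M, r (x) m |-> r m (computed on a representative;
   it does not depend on the representative). *)
Definition tens_mult (x : Tens) : M :=
  \sum_(p <- trepr x) lm_act M p.1 p.2.

End Tensor.

Section Unital.
Variable R : nuRing.

Definition tunital (M : lmod R) : Prop := bijective (@tens_mult R M).

Definition tunital_ring : Prop := tunital (regmod R).

Lemma cmap_prop (P : lmod R) (p : P) : is_hom (regmod R) P (fun r => lm_act P r p).
Proof. by split=> *; rewrite ?lm_actDl ?lm_actA. Qed.

Definition c_map (P : lmod R) (p : P) : HomR P := exist _ _ (cmap_prop p).

Definition cunital (P : lmod R) : Prop := bijective (@c_map P).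

(* g : P2 -> P3 is a cokernel of f : P1 -> P2 in the category R-cMod of     *)
(* c-unital left R-modules (all of P1, P2, P3 assumed c-unital).             *)
Definition is_cokernel_c (P1 P2 P3 : lmod R) (f : P1 -> P2) (g : P2 -> P3) : Prop :=
  (forall x, g (f x) = 0) /\
  forall (P : lmod R), cunital P ->
  forall h : P2 -> P, is_hom P2 P h -> (forall x, h (f x) = 0) ->
  exists k : P3 -> P, [/\ is_hom P3 P k, (forall y, h y = k (g y)) &
     forall k' : P3 -> P, is_hom P3 P k' -> (forall y, h y = k' (g y)) ->
       forall z, k' z = k z].

(* Q is c-projective: Hom_R(Q, -) : R-cMod -> Ab takes every cokernel        *)
(* sequence P1 -f-> P2 -g-> P3 in R-cMod to a cokernel sequence of abelian   *)
(* groups Hom_R(Q,P1) -> Hom_R(Q,P2) -> Hom_R(Q,P3), i.e., (since the        *)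
(* composite is zero) g_* is surjective and ker g_* = im f_*.                *)
Definition cproj (Q : lmod R) : Prop :=
  forall (P1 P2 P3 : lmod R), cunital P1 -> cunital P2 -> cunital P3 ->
  forall (f : P1 -> P2) (g : P2 -> P3), is_hom P1 P2 f -> is_hom P2 P3 g ->
  is_cokernel_c f g ->
  (forall phi : Q -> P3, is_hom Q P3 phi ->
     exists psi : Q -> P2, is_hom Q P2 psi /\ forall q, g (psi q) = phi q) /\
  (forall psi : Q -> P2, is_hom Q P2 psi -> (forall q, g (psi q) = 0) ->
     exists chi : Q -> P1, is_hom Q P1 chi /\ forall q, f (chi q) = psi q).

End Unital.
Arguments tunital_ring : clear implicits.

From HB Require Import structures.
From mathcomp Require Import all_boot all_algebra.
From mathcomp Require Import boolp.

Set Implicit Arguments.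
Unset Strict Implicit.
Unset Printing Implicit Defensive.
Import GRing.Theory.
Local Open Scope ring_scope.

(* For a c-unital module P, an element p is determined by the map r |-> r p,
   and every R-linear map R -> P is of this form.  From this one gets that
   precomposition with c : Q -> Hom_R(R, Q) and with the multiplication
   R (x)_R Q -> Q gives bijections
     Hom_R(Hom_R(R, Q), P) = Hom_R(Q, P) = Hom_R(R (x)_R Q, P),
   natural in c-unital P.  So the three functors Hom_R(-, P) on c-unital
   modules are isomorphic and take the same cokernels to cokernels. *)

Section CUnital.
Variable R : nuRing.

Lemma hom_comp (M N P : lmod R) (f : M -> N) (g : N -> P) :
  is_hom M N f -> is_hom N P g -> is_hom M P (fun x => g (f x)).
Proof. by move=> [fD fL] [gD gL]; split=> *; rewrite ?fD ?gD ?fL ?gL. Qed.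

Lemma hom_zero (M N : lmod R) : is_hom M N (fun _ => 0).
Proof. by split=> *; rewrite ?addr0 ?lm_act0. Qed.

Lemma hom0 (M N : lmod R) (f : M -> N) : is_hom M N f -> f 0 = 0.
Proof. by case=> fD _; apply: (addrI (f 0)); rewrite -fD !addr0. Qed.

Lemma hom_sum (M N : lmod R) (f : M -> N) (I : Type) (s : seq I) (F : I -> M) :
  is_hom M N f -> f (\sum_(i <- s) F i) = \sum_(i <- s) f (F i).
Proof. by move=> fH; exact: (big_morph f (proj1 fH) (hom0 fH)). Qed.

Lemma lm_act0l (M : lmod R) (m : M) : lm_act M 0 m = 0.
Proof. by apply: (addrI (lm_act M 0 m)); rewrite addr0 -lm_actDl addr0. Qed.

Lemma cunital_act_inj (P : lmod R) : cunital P -> forall p1 p2 : P,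
  (forall r, lm_act P r p1 = lm_act P r p2) -> p1 = p2.
Proof.
move=> [ci c1 _] p1 p2 e; rewrite -(c1 p1) -(c1 p2); congr ci.
exact: homR_ext.
Qed.

Lemma cunital_represent (P : lmod R) (X : Type) (h : X -> R -> P) :
  cunital P -> (forall x, is_hom (regmod R) P (h x)) ->
  exists p : X -> P, forall x r, lm_act P r (p x) = h x r.
Proof.
move=> [ci _ c2] hH; exists (fun x => ci (exist _ _ (hH x))) => x r.
by have := f_equal (fun g : HomR P => sval g r) (c2 (exist _ _ (hH x))).
Qed.

End CUnital.

Section Transfer.
Variables (R : nuRing) (Q Q' : lmod R) (u : Q' -> Q).

Definition c_epi : Prop :=
  forall P : lmod R, cunital P -> forall f1 f2 : Q -> P,
  is_hom Q P f1 -> is_hom Q P f2 ->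
  (forall x, f1 (u x) = f2 (u x)) -> forall q, f1 q = f2 q.

Definition c_extendable : Prop :=
  forall P : lmod R, cunital P -> forall f : Q' -> P, is_hom Q' P f ->
  exists phi : Q -> P, is_hom Q P phi /\ forall x, phi (u x) = f x.

Hypotheses (uH : is_hom Q' Q u) (u_epi : c_epi) (u_ext : c_extendable).

Lemma cproj_transfer_l : cproj Q -> cproj Q'.
Proof.
move=> cpQ P1 P2 P3 c1 c2 c3 f g fH gH cok.
have [g_lift g_exact] := cpQ P1 P2 P3 c1 c2 c3 f g fH gH cok; split.
- move=> phi' phi'H; have [phi [phiH ephi]] := u_ext c3 phi'H.
  have [psi [psiH epsi]] := g_lift _ phiH.
  exists (fun x => psi (u x)); split; first exact: hom_comp uH psiH.
  by move=> x; rewrite epsi ephi.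
- move=> psi' psi'H gpsi'; have [psi [psiH epsi]] := u_ext c2 psi'H.
  have gpsi : forall q, g (psi q) = 0.
    apply: (u_epi c3 (hom_comp psiH gH) (hom_zero _ _)) => x.
    by rewrite epsi gpsi'.
  have [chi [chiH echi]] := g_exact _ psiH gpsi.
  exists (fun x => chi (u x)); split; first exact: hom_comp uH chiH.
  by move=> x; rewrite echi epsi.
Qed.

Lemma cproj_transfer_r : cproj Q' -> cproj Q.
Proof.
move=> cpQ' P1 P2 P3 c1 c2 c3 f g fH gH cok.
have [g_lift g_exact] := cpQ' P1 P2 P3 c1 c2 c3 f g fH gH cok; split.
- move=> phi phiH; have [psi' [psi'H epsi']] := g_lift _ (hom_comp uH phiH).
  have [psi [psiH epsi]] := u_ext c2 psi'H.
  exists psi; split=> //.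
  by apply: (u_epi c3 (hom_comp psiH gH) phiH) => x; rewrite epsi epsi'.
- move=> psi psiH gpsi.
  have [chi' [chi'H echi']] :=
    g_exact _ (hom_comp uH psiH) (fun x => gpsi (u x)).
  have [chi [chiH echi]] := u_ext c1 chi'H.
  exists chi; split=> //.
  by apply: (u_epi c2 (hom_comp chiH fH) psiH) => x; rewrite echi echi'.
Qed.

Lemma cproj_transfer : cproj Q <-> cproj Q'.
Proof. by split; [apply: cproj_transfer_l | apply: cproj_transfer_r]. Qed.

End Transfer.

Section HomR.
Variables (R : nuRing) (Q : lmod R).

Lemma c_map_hom : is_hom Q (HomR Q) (@c_map R Q).
Proof.
split=> [x y|r x]; apply: homR_ext => t /=; first by rewrite lm_actDr.
by rewrite lm_actA.
Qed.

Lemma homR_act_c_map (r : R) (g : HomR Q) :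
  lm_act (HomR Q) r g = c_map (sval g r).
Proof. by apply: homR_ext => t /=; case: g => g gH; apply: gH.2. Qed.

Lemma c_map_epi : c_epi (@c_map R Q).
Proof.
move=> P cP f1 f2 [_ f1L] [_ f2L] e g; apply: (cunital_act_inj cP) => r.
by rewrite -f1L -f2L homR_act_c_map e.
Qed.

Lemma c_map_extendable : c_extendable (@c_map R Q).
Proof.
move=> P cP f [fD fL].
have hH (g : HomR Q) : is_hom (regmod R) P (fun r => f (sval g r)).
  by case: g => [g [gD gL]]; split=> * /=; rewrite ?gD ?fD ?gL ?fL.
have [phi ephi] := cunital_represent cP hH.
exists phi; split; first split.
- move=> g1 g2; apply: (cunital_act_inj cP) => r.
  by rewrite lm_actDr !ephi /= fD.
- move=> s g; apply: (cunital_act_inj cP) => r.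
  by rewrite -lm_actA !ephi.
- by move=> x; apply: (cunital_act_inj cP) => r; rewrite ephi /= fL.
Qed.

End HomR.

Section Tensor.
Variables (R : nuRing) (Q : lmod R).

Definition pure_tens (r : R) (q : Q) : Tens Q := tclass [:: (r, q)].

Lemma tclass_cat (l1 l2 : tgen Q) :
  tclass (l1 ++ l2) = (tclass l1 : Tens Q) + tclass l2.
Proof. exact/tclass_eq/trel_sym/trel_cat/trel_repr/trel_repr. Qed.

Lemma tclass_sum (l : tgen Q) : tclass l = \sum_(p <- l) pure_tens p.1 p.2.
Proof.
elim: l => [|[r q] l IH]; first by rewrite big_nil.
by rewrite big_cons -IH /pure_tens -tclass_cat.
Qed.

Lemma pure_tensDl r s q : pure_tens (r + s) q = pure_tens r q + pure_tens s q.
Proof. by rewrite -tclass_cat; apply/tclass_eq/trel_addl. Qed.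

Lemma pure_tensDr r q q' :
  pure_tens r (q + q') = pure_tens r q + pure_tens r q'.
Proof. by rewrite -tclass_cat; apply/tclass_eq/trel_addr. Qed.

Lemma pure_tens_bal r s q :
  pure_tens (nu_mul r s) q = pure_tens r (lm_act Q s q).
Proof. exact/tclass_eq/trel_bal. Qed.

Lemma tens_act_pure s r q :
  lm_act (Tens Q) s (pure_tens r q) = pure_tens (nu_mul s r) q.
Proof. exact: tclass_eq (trel_scal s (trel_repr _)). Qed.

Lemma act_sum_trel (l1 l2 : tgen Q) : trel l1 l2 ->
  \sum_(p <- l1) lm_act Q p.1 p.2 = \sum_(p <- l2) lm_act Q p.1 p.2.
Proof.
elim=> //.
- by move=> ? ? ? _ -> _ ->.
- by move=> ? ? ? ? _ e1 _ e2; rewrite !big_cat e1 e2.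
- by move=> ? ?; rewrite !big_cat; apply: addrC.
- by move=> m; rewrite !big_cons !big_nil /= lm_act0l addr0.
- by move=> r s m; rewrite !big_cons !big_nil /= lm_actDl !addr0.
- by move=> r m n; rewrite !big_cons !big_nil /= lm_actDr !addr0.
- by move=> r s m; rewrite !big_cons !big_nil /= lm_actA.
Qed.

Lemma tens_mult_tclass (l : tgen Q) :
  tens_mult (tclass l) = \sum_(p <- l) lm_act Q p.1 p.2.
Proof. exact/act_sum_trel/trel_repr. Qed.

Lemma tens_mult_pure r q : tens_mult (pure_tens r q) = lm_act Q r q.
Proof. by rewrite tens_mult_tclass big_seq1. Qed.

Lemma tens_mult_hom : is_hom (Tens Q) Q (@tens_mult R Q).
Proof.
split=> [x y|r x]; first by rewrite tens_mult_tclass big_cat.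
rewrite tens_mult_tclass big_map /tens_mult.
rewrite (big_morph _ (@lm_actDr _ Q r) (@lm_act0 _ Q r)).
by apply: eq_bigr => p _; rewrite lm_actA.
Qed.

Lemma tens_mult_epi : c_epi (@tens_mult R Q).
Proof.
move=> P cP f1 f2 [_ f1L] [_ f2L] e q; apply: (cunital_act_inj cP) => r.
by rewrite -f1L -f2L -tens_mult_pure e.
Qed.

Lemma tens_mult_extendable : c_extendable (@tens_mult R Q).
Proof.
move=> P cP f fH; case: (fH) => fD fL.
have hH (q : Q) : is_hom (regmod R) P (fun r => f (pure_tens r q)).
  by split=> [r s|s r] /=; rewrite ?pure_tensDl ?fD // -fL tens_act_pure.
have [phi ephi] := cunital_represent cP hH.
have phiH : is_hom Q P phi.
  split=> [q q'|s q]; apply: (cunital_act_inj cP) => r.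
    by rewrite lm_actDr !ephi pure_tensDr fD.
  by rewrite -lm_actA !ephi pure_tens_bal.
exists phi; split=> // x; rewrite -[x]treprK tens_mult_tclass.
rewrite (hom_sum _ _ phiH) tclass_sum (hom_sum _ _ fH).
by apply: eq_bigr => p _; rewrite -ephi (proj2 phiH).
Qed.

End Tensor.

Theorem proposition8p4 (R : nuRing) (Q : lmod R) :
  tunital_ring R ->
  (cproj Q <-> cproj (HomR Q)) /\ (cproj (HomR Q) <-> cproj (Tens Q)).
Proof.
(* t-unitality of R is what makes R-cMod abelian; cproj refers to cokernels
   in R-cMod directly, so the argument does not need it. *)
move=> _.
have homQ := cproj_transfer (@c_map_hom R Q) (@c_map_epi R Q)
  (@c_map_extendable R Q).
have tensQ := cproj_transfer (@tens_mult_hom R Q) (@tens_mult_epi R Q)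
  (@tens_mult_extendable R Q).
by split; [exact: iff_sym homQ | exact: iff_trans homQ tensQ].
Qed.
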